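(* For every even integer $k\ge 4$, the graph $M_{\rm II}(k)$ is not word-representable.
   Context: For even $k\ge4$, $M_{\rm II}(k)$ is the split graph with clique $C=\{c_1,\dots,c_k\}$ and independent set $I=\{b_1,b_2,a_1,\dots,a_{k-2}\}$, where $N(b_1)=\{c_1,\dots,c_{k-2},c_k\}$, $N(b_2)=\{c_2,\dots,c_k\}$, and $N(a_i)=\{c_i,c_{i+1}\}$ for $1\le i\le k-2$. A graph $G=(V,E)$ is word-representable if there is a word $w$ over $V$ such that for all distinct $a,b\in V$, $ab\in E$ iff $a$ and $b$ alternate in $w$ (i.e. the subsequence of $w$ formed by all occurrences of $a$ and $b$ is $abab\cdots$ or $baba\cdots$). *)

From mathcomp Require Import all_boot.
Set Implicit Arguments. Unset Strict Implicit. Unset Printing Implicit Defensive.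

(* Vertices of M_II(k):  inl i        = c_(i+1)   (i < k)
                         inr (inl b)  = b_1 if b = false, b_2 if b = true
                         inr (inr i)  = a_(i+1)   (i < k-2)            *)
Definition MIIV (k : nat) : finType := ('I_k + (bool + 'I_(k - 2)))%type.

Definition MII_ci (k : nat) (x : bool + 'I_(k - 2)) (j : nat) : bool :=
  match x with
  | inl false => j != k - 2          (* N(b_1) = {c_1..c_(k-2), c_k} *)
  | inl true  => j != 0              (* N(b_2) = {c_2..c_k} *)
  | inr i => (j == i) || (j == i.+1) (* N(a_(i+1)) = {c_(i+1), c_(i+2)} *)
  end.

Definition MII_adj (k : nat) (u v : MIIV k) : bool :=
  match u, v with
  | inl i, inl j => i != j
  | inl j, inr x => MII_ci x j
  | inr x, inl j => MII_ci x j
  | inr _, inr _ => false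
  end.

Definition alternate (T : eqType) (w : seq T) (a b : T) : bool :=
  let s := filter (fun x => (x == a) || (x == b)) w in
  all (fun p => p.1 != p.2) (zip s (behead s)).

Definition word_representable (T : finType) (e : rel T) : Prop :=
  exists w : seq T,
    (forall x : T, x \in w) /\
    (forall a b : T, a != b -> e a b = alternate w a b).

From mathcomp Require Import all_boot zify.
Set Implicit Arguments. Unset Strict Implicit. Unset Printing Implicit Defensive.

(* Order the vertices by their first occurrence in a representing word w.  If
   uv is an edge and u occurs first, every prefix of w contains as many u's as
   v's or one more; adding these balances shows that a 4-cycle whose vertices
   first occur in the order of the cycle has both chords.  Consequently two
   non-adjacent vertices with common neighbours p and q lie on the same arc
   between p and q of the cyclic order of first occurrences.  Applied to a_j
   against the clique, this puts c_1, ..., c_(k-1) in cyclic order with c_k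
   outside the arc from c_1 to c_(k-1), so c_(k-1) and c_1 lie on different
   arcs between c_k and c_2.  Yet b_1 shares an arc with c_(k-1), b_2 with
   c_1, and b_1 with b_2. *)

Section Alternation.
Variable T : eqType.
Implicit Types (a b x : T) (s w : seq T).

Definition occurrences a b w := [seq x <- w | (x == a) || (x == b)].

Definition alternating s := all (fun p => p.1 != p.2) (zip s (behead s)).

Lemma alternateE w a b : alternate w a b = alternating (occurrences a b w).
Proof. by []. Qed.

Lemma occurrencesC a b w : occurrences a b w = occurrences b a w.
Proof. by apply: eq_filter => x; rewrite orbC. Qed.

Lemma alternateC w a b : alternate w a b = alternate w b a.
Proof. by rewrite !alternateE occurrencesC. Qed.

Lemma alternating_cons_occurrences a b w : a != b ->
  alternating (a :: occurrences a b w) =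
  alternating (occurrences a b w) && (head b (occurrences a b w) == b).
Proof.
move=> ab; case E: (occurrences a b w) => [|y s]; first by rewrite /= eqxx.
rewrite /alternating /= -/(alternating _).
have : y \in occurrences a b w by rewrite E mem_head.
rewrite mem_filter => /andP[/orP[|] /eqP-> _].
  by rewrite eqxx (negbTE ab) andbF.
by rewrite ab eqxx andbT.
Qed.

Lemma head_occurrences a b w : index a w < index b w ->
  head a (occurrences a b w) = a.
Proof.
elim: w => [|x w IH] //; rewrite /occurrences /=.
case: (eqVneq x a) => [//|_]; case: (eqVneq x b) => [//|_].
by rewrite ltnS => /IH.
Qed.

Definition balanced a b s :=
  count_mem b s <= count_mem a s <= (count_mem b s).+1.

Lemma balanced_prefixesE a b w : a != b ->
  (forall n, balanced a b (take n w)) <->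
  alternate w a b && (head a (occurrences a b w) == a).
Proof.
elim: w a b => [|x w IH] a b ab; first by split=> // _; rewrite /= eqxx.
have prefixesE : (forall n, balanced a b (take n (x :: w))) <->
                 forall n, balanced a b (x :: take n w).
  by split=> [H n | H [|n]] //; [exact: (H n.+1) | exact: H].
rewrite prefixesE alternateE /occurrences /=.
(* A leading [a] turns balance of [a] over [b] into balance of [b] over [a]. *)
case: (eqVneq x a) => [->|xa] /=.
  rewrite eqxx andbT -/(occurrences a b w) alternating_cons_occurrences //.
  rewrite occurrencesC -alternateE -IH 1?eq_sym //.
  by split=> H n; move: (H n); rewrite /balanced /= eqxx (negbTE ab); lia.
case: (eqVneq x b) => [->|xb] /=.
  have ba : (b == a) = false by rewrite eq_sym (negbTE ab).
  by rewrite ba andbF; split=> // /(_ 0); rewrite /balanced take0 /= eqxx ba.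
rewrite -/(occurrences a b w) -alternateE -IH //.
by split=> H n; move: (H n); rewrite /balanced /= (negbTE xa) (negbTE xb).
Qed.

End Alternation.

Definition cyclic_order (x y z : nat) := [|| x < y < z, y < z < x | z < x < y].

Lemma cyclic_orderC a b c : a != b -> b != c -> a != c ->
  cyclic_order a c b = ~~ cyclic_order a b c.
Proof. by rewrite /cyclic_order; lia. Qed.

Lemma cyclic_order_adjacent a b c z : a != b -> a != c -> b != c ->
  z != b -> z != c -> cyclic_order b z c = cyclic_order b a c ->
  cyclic_order a z c = cyclic_order a z b.
Proof. by rewrite /cyclic_order; lia. Qed.

Lemma cyclic_order_cross a b c z : a != b -> a != c -> a != z -> b != c ->
  b != z -> c != z -> cyclic_order a b c = ~~ cyclic_order a z c ->
  cyclic_order z c b = ~~ cyclic_order z a b.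
Proof. by rewrite /cyclic_order; lia. Qed.

Section WordRepresentation.
Variables (T : eqType) (e : rel T) (w : seq T).
Hypothesis w_total : forall x, x \in w.
Hypothesis w_represents : forall a b, a != b -> e a b = alternate w a b.

Local Notation first x := (index x w).

Lemma first_inj : injective (index^~ w).
Proof. by move=> x y; apply: index_inj. Qed.

Lemma represented_sym : symmetric e.
Proof.
move=> x y; case: (eqVneq x y) => [-> //|xy].
by rewrite (w_represents xy) w_represents 1?eq_sym // alternateC.
Qed.

Lemma represented_balancedE u v : first u < first v ->
  e u v <-> forall n, balanced u v (take n w).
Proof.
move=> lt; have uv : u != v by apply: contraTneq lt => ->; rewrite ltnn.
by rewrite w_represents // balanced_prefixesE // head_occurrences // eqxx andbT.
Qed.

(* Balances add up along the path v0 v1 v2 and subtract along v0 v3 v2, so the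
   balance of v0 over v2 lies in [0, 2] and in [-1, 1]; similarly for v1, v3. *)
Lemma four_cycle_chords v0 v1 v2 v3 :
  first v0 < first v1 -> first v1 < first v2 -> first v2 < first v3 ->
  e v0 v1 -> e v1 v2 -> e v2 v3 -> e v0 v3 -> e v0 v2 /\ e v1 v3.
Proof.
move=> lt01 lt12 lt23.
move=> /(represented_balancedE lt01) B01 /(represented_balancedE lt12) B12.
move=> /(represented_balancedE lt23) B23.
have lt03 : first v0 < first v3 by lia.
move=> /(represented_balancedE lt03) B03.
split; apply/represented_balancedE; try lia.
all: by move=> n; move: (B01 n) (B12 n) (B23 n) (B03 n); rewrite /balanced; lia.
Qed.

Hypothesis e_irrefl : irreflexive e.

Lemma first_neq_edge a b : e a b -> first a <> first b.
Proof. by move=> eab /first_inj ab; rewrite ab e_irrefl in eab. Qed.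

Lemma between_common_neighbours x y p q :
  e x p -> e x q -> e y p -> e y q -> ~~ e x y ->
  first p < first x < first q -> first p < first y < first q.
Proof.
move=> exp exq eyp eyq nxy /andP[px xq].
have [epx epy eqy] : [/\ e p x, e p y & e q y].
  by rewrite !(represented_sym _ x, represented_sym _ y).
have := first_neq_edge eyp; have := first_neq_edge eyq.
case: (ltnP (first y) (first p)) => [yp _ _ | py].
  have [eyx _] := four_cycle_chords yp px xq eyp epx exq eyq.
  by rewrite represented_sym eyx in nxy.
case: (ltnP (first q) (first y)) => [qy _ _ | yq]; last by lia.
have [_ exy] := four_cycle_chords px xq qy epx exq eqy epy.
by rewrite exy in nxy.
Qed.

Lemma common_neighbours_same_arc x y p q :
  e p x -> e q x -> e p y -> e q y -> ~~ e x y ->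
  cyclic_order (first p) (first x) (first q) =
  cyclic_order (first p) (first y) (first q).
Proof.
rewrite !(represented_sym p) !(represented_sym q) => exp exq eyp eyq nxy.
have nyx : ~~ e y x by rewrite represented_sym.
have := between_common_neighbours exp exq eyp eyq nxy.
have := between_common_neighbours eyp eyq exp exq nyx.
have := between_common_neighbours exq exp eyq eyp nxy.
have := between_common_neighbours eyq eyp exq exp nyx.
have := first_neq_edge exp; have := first_neq_edge exq.
have := first_neq_edge eyp; have := first_neq_edge eyq.
rewrite /cyclic_order; lia.
Qed.

End WordRepresentation.

Section CyclicChain.
Variables (k : nat) (F : nat -> nat).
Hypothesis F_inj : forall x y, x < k -> y < k -> F x = F y -> x = y.
Hypothesis consecutive_arc : forall j x y, j.+2 < k -> x < k -> y < k ->
  x != j -> x != j.+1 -> y != j -> y != j.+1 ->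
  cyclic_order (F j) (F x) (F j.+1) = cyclic_order (F j) (F y) (F j.+1).

Lemma lt_inj_neq x y : x < k -> y < k -> x != y -> F x != F y.
Proof. by move=> xk yk; apply: contra_neq; apply: F_inj. Qed.

(* [d] chooses the orientation of the circle. *)
Definition arc_ordered (d : bool) j := forall x, x < k -> x != 0 -> x != j ->
  cyclic_order (F 0) (F x) (F j) = ((0 < x < j) == d).

Lemma arc_ordered1 : 2 < k -> exists d, arc_ordered d 1.
Proof.
move=> k2; exists (~~ cyclic_order (F 0) (F 2) (F 1)) => x xk x0 x1.
have -> : (0 < x < 1) = false by lia.
by rewrite (consecutive_arc (y := 2)) //; case: (cyclic_order _ _ _).
Qed.

Lemma arc_ordered_step (d : bool) j : 0 < j -> j.+2 < k -> arc_ordered d j ->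
  arc_ordered d j.+1.
Proof.
move=> j0 jk ord_j x xk x0 xj1.
have n0j : F 0 != F j by apply: lt_inj_neq; lia.
have n0j1 : F 0 != F j.+1 by apply: lt_inj_neq; lia.
have njj1 : F j != F j.+1 by apply: lt_inj_neq; lia.
case: (eqVneq x j) => [-> | xj].
  have := ord_j j.+1 (ltnW jk) isT (negbT (gtn_eqF (ltnSn j))).
  by rewrite cyclic_orderC //; lia.
rewrite (cyclic_order_adjacent (b := F j)) ?ord_j //.
- by congr (_ == _); lia.
- by apply: lt_inj_neq; lia.
- by apply: lt_inj_neq; lia.
- by apply: consecutive_arc; lia.
Qed.

Lemma arc_ordered_exists j : 0 < j -> j.+1 < k -> exists d, arc_ordered d j.
Proof.
elim: j => [// | j IH] _; case: (posnP j) => [-> | j0] jk.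
  exact: arc_ordered1.
by have [d ord_j] := IH j0 (ltnW jk); exists d; apply: arc_ordered_step.
Qed.

End CyclicChain.

Lemma MII_adj_irrefl k : irreflexive (@MII_adj k).
Proof. by case=> [i|[b|i]] //=; rewrite eqxx. Qed.

Section MII.
Variable n : nat.
Local Notation k := n.+4.
Local Notation e := (@MII_adj k).

(* [cV j] and [aV j] are the vertices c_(j+1) and a_(j+1) of the paper. *)
Definition cV (j : nat) : MIIV k := inl (inord j).
Definition aV (i : nat) : MIIV k := inr (inr (inord i : 'I_n.+2)).
Definition bV (b : bool) : MIIV k := inr (inl b).

Lemma adj_cV x y : x < k -> y < k -> e (cV x) (cV y) = (x != y).
Proof. by move=> xk yk; rewrite /= -(inj_eq val_inj) /= !inordK. Qed.

Lemma adj_cV_aV x i : x < k -> i < n.+2 ->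
  e (cV x) (aV i) = (x == i) || (x == i.+1).
Proof. by move=> xk ik; rewrite /= !inordK. Qed.

Lemma adj_cV_bV x b : x < k ->
  e (cV x) (bV b) = if b then x != 0 else x != n.+2.
Proof.
by move=> xk; case: b; rewrite /= inordK //; congr (~~ (_ == _)); lia.
Qed.

Section Representation.
Variable w : seq (MIIV k).
Hypothesis w_total : forall x, x \in w.
Hypothesis w_represents : forall a b, a != b -> e a b = alternate w a b.

Local Notation F j := (index (cV j) w).
Let same_arc :=
  common_neighbours_same_arc w_total w_represents (@MII_adj_irrefl k).

Lemma clique_first_inj x y : x < k -> y < k -> F x = F y -> x = y.
Proof.
move=> xk yk /(first_inj w_total) eq_xy; apply/eqP/negPn.
by rewrite -(adj_cV xk yk) eq_xy (MII_adj_irrefl (cV y)).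
Qed.

Lemma clique_consecutive_arc j x y : j.+2 < k -> x < k -> y < k ->
  x != j -> x != j.+1 -> y != j -> y != j.+1 ->
  cyclic_order (F j) (F x) (F j.+1) = cyclic_order (F j) (F y) (F j.+1).
Proof.
move=> jk xk yk xj xj1 yj yj1.
have via_aV z : z < k -> z != j -> z != j.+1 ->
    cyclic_order (F j) (F z) (F j.+1) =
    cyclic_order (F j) (index (aV j) w) (F j.+1).
  by move=> zk zj zj1; apply: same_arc; rewrite ?adj_cV ?adj_cV_aV //; lia.
by rewrite !via_aV.
Qed.

Lemma clique_arcs_cross :
  cyclic_order (F n.+3) (F n.+2) (F 1) = ~~ cyclic_order (F n.+3) (F 0) (F 1).
Proof.
have [d ord] := arc_ordered_exists clique_first_inj clique_consecutive_arc
  (isT : 0 < n.+2) (ltnSn _).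
apply: cyclic_order_cross; rewrite ?(lt_inj_neq clique_first_inj) //; try lia.
by rewrite (ord 1) ?(ord n.+3) //; try lia; case: d.
Qed.

Lemma b_vertices_same_arc :
  cyclic_order (F n.+3) (F n.+2) (F 1) = cyclic_order (F n.+3) (F 0) (F 1).
Proof.
rewrite (@same_arc _ (bV false)) ?(@same_arc (bV false) (bV true))
        ?(@same_arc (cV 0) (bV true)) //.
all: by rewrite ?adj_cV ?adj_cV_bV //; lia.
Qed.

End Representation.
End MII.

Theorem lemma10 (k : nat) : 4 <= k -> ~~ odd k ->
  ~ word_representable (@MII_adj k).
Proof.
(* The argument does not use the parity of k. *)
move=> k4 _ [w [w_total w_represents]].
have [n kE] : exists n, k = n.+4 by exists (k - 4); lia.
subst k; have := clique_arcs_cross w_total w_represents.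
rewrite (b_vertices_same_arc w_total w_represents).
by case: (cyclic_order _ _ _).
Qed.
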